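(* Let $\phi:\mathbb{R}^d\to\mathbb{R}^d$ be a bi-Lipschitz homeomorphism preserving Lebesgue measure, let $K_\phi$ and $\rho_a$ be as in the context, and fix $a\in[0,1]$. Then for every ball $B=B(x_0,r)$ in $\mathbb{R}^d$ (with radius $r_B=r$) there exists a collection $(O_k)_k$ of balls in $\mathbb{R}^d$, with radii $r_{O_k}$, such that: (i) the collection of doubled balls $(2O_k)_k$ is a bounded covering of $\phi(B)$, i.e. $\phi(B)\subset\bigcup_k 2O_k$ and every point of $\mathbb{R}^d$ belongs to at most $N$ of the balls $2O_k$, with $N$ depending only on $d$; (ii) the balls $(O_k)_k$ are pairwise disjoint; (iii) for every $p\in[1,\infty)$, $$\left(\frac{1}{|B|}\sum_k |O_k|\,\rho_a\!\left(\frac{r_B}{r_{O_k}}\right)^p\right)^{1/p}\le C\,\rho_a(K_\phi),$$ where $C$ depends only on the dimension $d$, on $a$ and on $p$ (not on $B$ or $\phi$).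
   Context: For a bi-Lipschitz homeomorphism $\phi$ of $\mathbb{R}^d$, $K_\phi:=\sup_{x\neq y}\left(\frac{|\phi(x)-\phi(y)|}{|x-y|}+\frac{|x-y|}{|\phi(x)-\phi(y)|}\right)$. ''Preserving Lebesgue measure'' means $|\phi(A)|=|A|$ for all measurable $A$. For $a\in[0,1]$, $\rho_a:[0,\infty)\to\mathbb{R}$ is defined by $\rho_a(r)=r^a$ if $a>0$ and $\rho_0(r)=\log(r)$. For a ball $O=B(x,s)$, $2O$ denotes $B(x,2s)$. *)

From HB Require Import structures.
From mathcomp Require Import all_boot all_order all_algebra.
From mathcomp Require Import all_classical all_reals all_analysis.
Set Implicit Arguments. Unset Strict Implicit. Unset Printing Implicit Defensive.
Import Order.TTheory GRing.Theory Num.Theory.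
Local Open Scope classical_set_scope.
Local Open Scope ring_scope.

Section Defs.
Variables (R : realType) (d : nat).
Notation V := 'rV[R]_d.

Definition enorm (x : V) : R := Num.sqrt (\sum_(i < d) (x ord0 i) ^+ 2).

Definition eball (x : V) (s : R) : set V := [set y | enorm (y - x) < s].

Definition box (a b : V) : set V := [set y | forall i, a ord0 i <= y ord0 i < b ord0 i].
Definition boxvol (a b : V) : R := \prod_(i < d) Num.max (b ord0 i - a ord0 i) 0.

Definition leb_outer (A : set V) : \bar R :=
  ereal_inf [set s | exists (a b : nat -> V),
    A `<=` \bigcup_n box (a n) (b n) /\
    s = (\sum_(0 <= n <oo) (boxvol (a n) (b n))%:E)%E].

Definition leb_measurable (A : set V) : Prop :=
  forall E : set V, leb_outer E = (leb_outer (E `&` A) + leb_outer (E `&` ~` A))%E.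

Definition preserves_lebesgue (phi : V -> V) : Prop :=
  forall A, leb_measurable A -> leb_outer (phi @` A) = leb_outer A.

Definition bilipschitz (phi : V -> V) : Prop :=
  exists L : R, 0 < L /\ forall x y,
    enorm (phi x - phi y) <= L * enorm (x - y) /\ enorm (x - y) <= L * enorm (phi x - phi y).

Definition Kphi (phi : V -> V) : R :=
  sup [set t | exists x y, x != y /\
     t = enorm (phi x - phi y) / enorm (x - y) + enorm (x - y) / enorm (phi x - phi y)].
End Defs.

Definition rho {R : realType} (a r : R) : R := if a == 0 then ln r else powR r a.

(** Let [K = K_phi] and [s = r / K]. Since [phi^-1] is [K]-Lipschitz, every ball of radius [s]
    centred in [phi(B)] pulls back into [2B]. Take a maximal family of [2 s]-separated points [c_k]
    of [phi(B)]: by maximality the balls [B(c_k, 2 s)] cover [phi(B)], by separation the balls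
    [O_k = B(c_k, s)] are disjoint, and a grid argument shows that at most [(2 d + 1) ^ d] of the
    [c_k] lie within [2 s] of any point. As [phi] preserves volume, the disjoint [O_k] have total
    volume at most a dimensional multiple of [|B|]; all radii being [s], [r_B / r_(O_k) = K], and
    (iii) holds with [C = (8 d ^ 2) ^ d].
    Volumes are those of the outer measure defined by box covers: balls are compared with cubes,
    whose measure is [(2 t) ^ d] times that of the unit cube by scaling, and boxes are
    Caratheodory measurable, which gives additivity on disjoint cubes and lets the
    measure-preservation hypothesis apply. *)

From mathcomp Require Import all_boot all_order all_algebra.
From mathcomp Require Import all_classical all_reals all_analysis.
From mathcomp Require Import ring lra.
Import Order.TTheory GRing.Theory Num.Theory.
Local Open Scope classical_set_scope.
Local Open Scope ring_scope.

(** * Euclidean norm *)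

Section EuclideanNorm.
Context {R : realType} {d : nat}.
Implicit Types (x y z : 'rV[R]_d).

Lemma enorm_ge0 x : 0 <= enorm x.
Proof. exact: sqrtr_ge0. Qed.

Lemma enorm_sqr x : enorm x ^+ 2 = \sum_(i < d) x ord0 i ^+ 2.
Proof. by rewrite sqr_sqrtr // sumr_ge0 // => i _; rewrite sqr_ge0. Qed.

Lemma enorm_lt_sqr x s : 0 <= s -> (enorm x < s) = (\sum_(i < d) x ord0 i ^+ 2 < s ^+ 2).
Proof. by move=> s0; rewrite -enorm_sqr ltr_pXn2r // nnegrE enorm_ge0. Qed.

Lemma enorm_le_sqr x s : 0 <= s -> (enorm x <= s) = (\sum_(i < d) x ord0 i ^+ 2 <= s ^+ 2).
Proof. by move=> s0; rewrite -enorm_sqr ler_pXn2r // nnegrE enorm_ge0. Qed.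

Lemma enorm0 : enorm (0 : 'rV[R]_d) = 0.
Proof. by rewrite /enorm big1 ?sqrtr0 // => i _; rewrite mxE expr0n. Qed.

Lemma enormN x : enorm (- x) = enorm x.
Proof. by rewrite /enorm; congr Num.sqrt; apply: eq_bigr => i _; rewrite mxE sqrrN. Qed.

Lemma enorm_distC x y : enorm (x - y) = enorm (y - x).
Proof. by rewrite -enormN opprB. Qed.

Lemma coord_le_enorm x i : `|x ord0 i| <= enorm x.
Proof.
rewrite -sqrtr_sqr /enorm ler_sqrt ?sumr_ge0 // => [|j _]; last exact: sqr_ge0.
by rewrite (bigD1 i) //= lerDl sumr_ge0 // => j _; exact: sqr_ge0.
Qed.

Lemma enorm_eq0 x : (enorm x == 0) = (x == 0).
Proof.
apply/eqP/eqP => [x0|->]; last exact: enorm0.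
by apply/rowP => i; apply/eqP; rewrite mxE -normr_le0 -x0 coord_le_enorm.
Qed.

Lemma enorm_gt0 x : (0 < enorm x) = (x != 0).
Proof. by rewrite lt_def enorm_ge0 enorm_eq0 andbT. Qed.

Lemma cauchy_schwarz x y : \sum_(i < d) x ord0 i * y ord0 i <= enorm x * enorm y.
Proof.
have [/eqP|xy_neq0] := eqVneq (enorm x * enorm y) 0.
  rewrite mulf_eq0 !enorm_eq0 => /orP[] /eqP->;
    by rewrite big1 ?mulr_ge0 ?enorm_ge0 // => i _; rewrite mxE ?mul0r ?mulr0.
have xy_gt0 : 0 < enorm x * enorm y by rewrite lt_def xy_neq0 mulr_ge0 ?enorm_ge0.
set P := \sum_(i < d) _.
have : 0 <= \sum_(i < d) (enorm y * x ord0 i - enorm x * y ord0 i) ^+ 2.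
  by apply: sumr_ge0 => i _; exact: sqr_ge0.
have -> : \sum_(i < d) (enorm y * x ord0 i - enorm x * y ord0 i) ^+ 2 =
    2 * (enorm x * enorm y) * (enorm x * enorm y - P).
  have -> : 2 * (enorm x * enorm y) * (enorm x * enorm y - P) =
      enorm y ^+ 2 * enorm x ^+ 2 - 2 * (enorm x * enorm y) * P + enorm x ^+ 2 * enorm y ^+ 2.
    by ring.
  rewrite {1}(enorm_sqr x) {2}(enorm_sqr y) /P !mulr_sumr -sumrN -!big_split /=.
  by apply: eq_bigr => i _; rewrite sqrrB !exprMn; ring.
by rewrite pmulr_rge0 ?subr_ge0 // mulr_gt0.
Qed.

Lemma enormD x y : enorm (x + y) <= enorm x + enorm y.
Proof.
rewrite enorm_le_sqr ?addr_ge0 ?enorm_ge0 // sqrrD !enorm_sqr.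
have -> : \sum_(i < d) (x + y) ord0 i ^+ 2 =
    \sum_(i < d) x ord0 i ^+ 2 + 2 * \sum_(i < d) x ord0 i * y ord0 i + \sum_(i < d) y ord0 i ^+ 2.
  rewrite mulr_sumr -!big_split /=; apply: eq_bigr => i _.
  by rewrite mxE sqrrD; ring.
have := cauchy_schwarz x y; rewrite lerD2r lerD2l mulr2n; lra.
Qed.

Lemma enorm_distD x y z : enorm (x - z) <= enorm (x - y) + enorm (y - z).
Proof. by rewrite (_ : x - z = (x - y) + (y - z)) ?enormD // addrA subrK. Qed.

Lemma enorm_lt_coord (h : R) x : (0 < d)%N -> 0 < h -> (forall i, `|x ord0 i| < h) ->
  enorm x < d%:R * h.
Proof.
move=> d_gt0 h0 hx; rewrite enorm_lt_sqr ?mulr_ge0 ?ler0n ?ltW //.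
apply: (@lt_le_trans _ _ (\sum_(i < d) h ^+ 2)).
  rewrite [X in X < _](bigD1 (Ordinal d_gt0)) // [X in _ < X](bigD1 (Ordinal d_gt0)) //=.
  apply: ltr_leD; first by rewrite -real_normK ?num_real // ltr_pXn2r ?nnegrE ?normr_ge0 ?ltW.
  by apply: ler_sum => i _; rewrite -real_normK ?num_real // ler_pXn2r ?nnegrE ?normr_ge0 ?ltW.
rewrite sumr_const card_ord -[h ^+ 2 *+ d]mulr_natl exprMn ler_pM2r ?exprn_gt0 //.
by rewrite -natrX ler_nat -{1}(expn1 d) leq_pexp2l.
Qed.

Lemma exists_coord_ge x (h : R) : (0 < d)%N -> 0 < h -> h <= enorm x ->
  exists i, h / d%:R <= `|x ord0 i|.
Proof.
move=> d_gt0 h0 hx; apply/not_existsP => small.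
have : enorm x < d%:R * (h / d%:R).
  apply: enorm_lt_coord => // [|i]; first by rewrite divr_gt0 ?ltr0n.
  by rewrite ltNge; apply/negP => /(small i).
by rewrite mulrC divfK ?pnatr_eq0 -?lt0n //; lra.
Qed.

End EuclideanNorm.

(** * The outer measure of box covers *)

Lemma nneseries_interleave_le {R : realType} (f g : nat -> \bar R) :
  (forall n, 0 <= f n)%E -> (forall n, 0 <= g n)%E ->
  (\sum_(0 <= n <oo) (if odd n then g n./2 else f n./2) <=
   \sum_(0 <= n <oo) f n + \sum_(0 <= n <oo) g n)%E.
Proof.
move=> f0 g0; pose h n := if odd n then g n./2 else f n./2.
change (\sum_(0 <= n <oo) h n <= \sum_(0 <= n <oo) f n + \sum_(0 <= n <oo) g n)%E.
have h0 n : (0 <= h n)%E by rewrite /h; case: ifP.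
have h_double N : (\sum_(0 <= n < N.*2) h n = \sum_(0 <= n < N) f n + \sum_(0 <= n < N) g n)%E.
  elim: N => [|N IH]; first by rewrite !big_geq // adde0.
  rewrite doubleS !big_nat_recr //= IH /h /= odd_double uphalf_double doubleK.
  by rewrite -!addeA; congr (_ + _)%E; rewrite addeCA.
apply: lime_le; first exact: is_cvg_nneseries.
apply: nearW => N; apply: (@le_trans _ _ (\sum_(0 <= n < N.*2) h n)%E).
  by apply: lee_sum_nneg_natr => //; rewrite -addnn leq_addr.
by rewrite h_double leeD // nneseries_lim_ge.
Qed.

Lemma mem_big_setU_nat {T : Type} (F : nat -> set T) n x :
  (\big[setU/set0]_(0 <= k < n) F k) x -> exists2 k, (k < n)%N & F k x.
Proof.
elim: n => [|n IH]; first by rewrite big_geq.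
rewrite big_nat_recr //= => -[/IH [k kn Fkx]|Fnx]; last by exists n.
by exists k => //; exact: ltnW.
Qed.

Section OuterMeasure.
Context {R : realType} {d : nat}.
Implicit Types (A B E : set 'rV[R]_d) (a b : 'rV[R]_d).
Local Open Scope ereal_scope.

Lemma boxvol_ge0 a b : (0 <= boxvol a b)%R.
Proof. by apply: prodr_ge0 => i _; rewrite le_max lexx orbT. Qed.

Lemma leb_outer_le_cover A (a b : nat -> 'rV[R]_d) :
  A `<=` \bigcup_n box (a n) (b n) ->
  leb_outer A <= \sum_(0 <= n <oo) (boxvol (a n) (b n))%:E.
Proof. by move=> cover; apply: ereal_inf_lbound; exists a, b. Qed.

Lemma leb_outer_ge A x :
  (forall a b : nat -> 'rV[R]_d, A `<=` \bigcup_n box (a n) (b n) ->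
     x <= \sum_(0 <= n <oo) (boxvol (a n) (b n))%:E) -> x <= leb_outer A.
Proof. by move=> h; apply: le_ereal_inf_tmp => _ [a [b [cover ->]]]; exact: h. Qed.

Lemma leb_outer_ge0 A : 0 <= leb_outer A.
Proof.
by apply: leb_outer_ge => a b _; apply: nneseries_ge0 => n _ _; rewrite lee_fin boxvol_ge0.
Qed.

Lemma le_leb_outer A B : A `<=` B -> leb_outer A <= leb_outer B.
Proof.
move=> AB; apply: leb_outer_ge => a b cover.
by apply: leb_outer_le_cover; exact: subset_trans cover.
Qed.

(* For [d = 0] every box, even a degenerate one, has volume [1] (an empty product). *)
Lemma boxvol00 : (0 < d)%N -> boxvol (0 : 'rV[R]_d) 0 = 0%R.
Proof. by move=> d_gt0; rewrite /boxvol (bigD1 (Ordinal d_gt0)) //= mxE subrr maxxx mul0r. Qed.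

Lemma leb_outer0 : (0 < d)%N -> leb_outer (set0 : set 'rV[R]_d) = 0.
Proof.
move=> d_gt0; apply/le_anti; rewrite leb_outer_ge0 andbT.
apply: le_trans (@leb_outer_le_cover set0 (fun=> 0%R) (fun=> 0%R) (sub0set _)) _.
by rewrite boxvol00 // eseries0.
Qed.

Lemma leb_outer_setU A B : leb_outer (A `|` B) <= leb_outer A + leb_outer B.
Proof.
have [A_fin|] := boolP (leb_outer A \is a fin_num); last first.
  by rewrite ge0_fin_numE ?leb_outer_ge0 // -leNgt leye_eq => /eqP->;
    rewrite addye ?leey // gt_eqF // (lt_le_trans _ (leb_outer_ge0 B)) ?ltNy0.
have [B_fin|] := boolP (leb_outer B \is a fin_num); last first.
  by rewrite ge0_fin_numE ?leb_outer_ge0 // -leNgt leye_eq => /eqP->;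
    rewrite addey ?leey // gt_eqF // (lt_le_trans _ (leb_outer_ge0 A)) ?ltNy0.
apply/lee_addgt0Pr => e e0; have e2_gt0 : (0 < e / 2)%R by rewrite divr_gt0.
have [_ [aA [bA [coverA ->]]] closeA] := lb_ereal_inf_adherent e2_gt0 A_fin.
have [_ [aB [bB [coverB ->]]] closeB] := lb_ereal_inf_adherent e2_gt0 B_fin.
pose a n := if odd n then aB n./2 else aA n./2.
pose b n := if odd n then bB n./2 else bA n./2.
have cover : A `|` B `<=` \bigcup_n box (a n) (b n).
  move=> x [/coverA [n _ xn]|/coverB [n _ xn]].
    by exists n.*2 => //; rewrite /a /b odd_double doubleK.
  by exists n.*2.+1 => //; rewrite /a /b /= odd_double /= uphalf_double.
apply: le_trans (leb_outer_le_cover _ _ _ cover) _.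
have -> : \sum_(0 <= n <oo) (boxvol (a n) (b n))%:E =
    \sum_(0 <= n <oo) (if odd n then (boxvol (aB n./2) (bB n./2))%:E
                       else (boxvol (aA n./2) (bA n./2))%:E).
  by apply: eq_eseriesr => n _; rewrite /a /b; case: ifP.
apply: le_trans (nneseries_interleave_le (fun n => (boxvol (aA n) (bA n))%:E)
                   (fun n => (boxvol (aB n) (bB n))%:E) _ _) _;
  try by move=> n; rewrite lee_fin boxvol_ge0.
apply: le_trans (leeD (ltW closeA) (ltW closeB)) _.
by rewrite addeACA -EFinD -splitr -addeA [X in _ + X]addeC addeA.
Qed.

Definition leb_caratheodory A :=
  forall E, leb_outer (E `&` A) + leb_outer (E `&` ~` A) <= leb_outer E.

Lemma leb_caratheodory_measurable A : leb_caratheodory A -> leb_measurable A.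
Proof.
move=> hA E; apply/le_anti; rewrite hA andbT.
by rewrite -[X in leb_outer X](setIT E) -(setUCr A) setIUr leb_outer_setU.
Qed.

Lemma leb_caratheodoryC A : leb_caratheodory A -> leb_caratheodory (~` A).
Proof. by move=> hA E; rewrite setCK addeC. Qed.

Lemma leb_caratheodoryI A B :
  leb_caratheodory A -> leb_caratheodory B -> leb_caratheodory (A `&` B).
Proof.
move=> hA hB E; apply: le_trans (hA E).
have -> : E `&` ~` (A `&` B) = (E `&` A `&` ~` B) `|` (E `&` ~` A).
  apply/seteqP; split=> x /=.
    move=> [Ex nAB]; have [Ax|nAx] := pselect (A x); last by right.
    by left; split => // Bx; exact: nAB.
  by case=> [[[Ex _] nB]|[Ex nA]]; split=> // -[].
apply: le_trans (leeD (lexx _) (leb_outer_setU _ _)) _.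
by rewrite addeA !setIA leeD // hB.
Qed.

Lemma leb_caratheodoryT : (0 < d)%N -> leb_caratheodory setT.
Proof. by move=> d_gt0 E; rewrite setIT setCT setI0 leb_outer0 // adde0. Qed.

End OuterMeasure.

Section BoxesAndCubes.
Context {R : realType} {d : nat}.
Implicit Types (A E : set 'rV[R]_d) (a b c x : 'rV[R]_d).

Definition set_coord x (i : 'I_d) (v : R) : 'rV[R]_d :=
  \row_j (if j == i then v else x ord0 j).

Lemma set_coordE x i v j : set_coord x i v ord0 j = if j == i then v else x ord0 j.
Proof. by rewrite mxE. Qed.

Lemma boxvol_split a b i (t : R) :
  (boxvol a (set_coord b i (Num.min (b ord0 i) t)) +
   boxvol (set_coord a i (Num.max (a ord0 i) t)) b = boxvol a b)%R.
Proof.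
rewrite /boxvol (bigD1 i) // [X in _ + X](bigD1 i) // [RHS](bigD1 i) //= !set_coordE !eqxx.
rewrite (eq_bigr (fun j => Num.max (b ord0 j - a ord0 j) 0)); last first.
  by move=> j /negbTE ji; rewrite set_coordE ji.
rewrite [X in _ + _ * X](eq_bigr (fun j => Num.max (b ord0 j - a ord0 j) 0)); last first.
  by move=> j /negbTE ji; rewrite set_coordE ji.
rewrite -mulrDl; congr (_ * _).
by rewrite /Num.max /Num.min; repeat case: ifP; lra.
Qed.

Definition halfspace (i : 'I_d) (t : R) : set 'rV[R]_d := [set y | y ord0 i < t].

Local Open Scope ereal_scope.

(* Cutting every box of a cover of [E] by the hyperplane [y_i = t] gives covers of the two
   halves of [E] whose total volume is the volume of the original cover. *)
Lemma leb_caratheodory_halfspace i t : leb_caratheodory (halfspace i t).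
Proof.
move=> E; apply: leb_outer_ge => a b cover.
pose b1 n := set_coord (b n) i (Num.min (b n ord0 i) t).
pose a2 n := set_coord (a n) i (Num.max (a n ord0 i) t).
have cover1 : E `&` halfspace i t `<=` \bigcup_n box (a n) (b1 n).
  move=> y [/cover [n _ yn] yi]; exists n => // j; rewrite /b1 set_coordE.
  by have := yn j; case: eqP => [->|_] // /andP[-> /= ?]; rewrite lt_min; apply/andP.
have cover2 : E `&` ~` halfspace i t `<=` \bigcup_n box (a2 n) (b n).
  move=> y [/cover [n _ yn] yi]; exists n => // j; rewrite /a2 set_coordE.
  have := yn j; case: eqP => [->|_] // /andP[ay ->]; rewrite andbT ge_max ay /=.
  by rewrite leNgt; apply/negP.
apply: le_trans (leeD (leb_outer_le_cover _ _ _ cover1) (leb_outer_le_cover _ _ _ cover2)) _.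
rewrite -nneseriesD; try by move=> n _ _; rewrite lee_fin boxvol_ge0.
by under eq_eseriesr do rewrite -EFinD boxvol_split.
Qed.

Lemma leb_caratheodory_box a b : (0 < d)%N -> leb_caratheodory (box a b).
Proof.
move=> d_gt0; pose slab (s : seq 'I_d) : set 'rV[R]_d :=
  [set y | forall j, j \in s -> a ord0 j <= y ord0 j < b ord0 j]%R.
have slab_caratheodory s : leb_caratheodory (slab s).
  elim: s => [|i s IH].
    by rewrite (_ : slab [::] = setT); [exact: leb_caratheodoryT | apply/seteqP; split].
  have -> : slab (i :: s) = ~` halfspace i (a ord0 i) `&` halfspace i (b ord0 i) `&` slab s.
    apply/seteqP; split => y /=.
      move=> ys; have /andP[yi1 yi2] := ys i (mem_head _ _).
      split; last by move=> j js; apply: ys; rewrite in_cons js orbT.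
      by split => //; apply/negP; rewrite -leNgt.
    move=> [[yi1 yi2] ys] j; rewrite in_cons => /orP[/eqP->|]; last exact: ys.
    by rewrite yi2 andbT leNgt; apply/negP.
  apply: leb_caratheodoryI => //.
  apply: leb_caratheodoryI; last exact: leb_caratheodory_halfspace.
  exact/leb_caratheodoryC/leb_caratheodory_halfspace.
rewrite (_ : box a b = slab (enum 'I_d)) //.
by apply/seteqP; split => y /= yab j; [move=> _; exact: yab | apply: yab; rewrite mem_enum].
Qed.

Definition dilation c (l : R) x : 'rV[R]_d := c + l *: x.

Lemma dilationE c l x j : dilation c l x ord0 j = (c ord0 j + l * x ord0 j)%R.
Proof. by rewrite !mxE. Qed.

Lemma boxvol_dilation c (l : R) a b : (0 < l)%R ->
  boxvol (dilation c l a) (dilation c l b) = (l ^+ d * boxvol a b)%R.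
Proof.
move=> l_gt0; rewrite /boxvol -[X in (l ^+ X)%R]card_ord -prodr_const -big_split /=.
apply: eq_bigr => i _.
by rewrite !dilationE maxr_pMr ?ltW // mulr0; congr Num.max; ring.
Qed.

Lemma leb_outer_dilation_le c (l : R) A : (0 < l)%R ->
  leb_outer (dilation c l @` A) <= (l ^+ d)%:E * leb_outer A.
Proof.
move=> l_gt0; have ld_gt0 : (0 < l ^+ d)%R by rewrite exprn_gt0.
rewrite -lee_pdivrMl //; apply: leb_outer_ge => a b cover; rewrite lee_pdivrMl //.
have cover' : dilation c l @` A `<=` \bigcup_n box (dilation c l (a n)) (dilation c l (b n)).
  move=> _ [y /cover [n _ yn] <-]; exists n => // j; rewrite !dilationE.
  by have /andP[y1 y2] := yn j; rewrite lerD2l ltrD2l ler_pM2l // ltr_pM2l // y1.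
apply: le_trans (leb_outer_le_cover _ _ _ cover') _.
rewrite -nneseriesZl; last by move=> n _; rewrite lee_fin boxvol_ge0.
by under eq_eseriesr do rewrite boxvol_dilation // EFinM.
Qed.

Lemma leb_outer_dilation c (l : R) A : (0 < l)%R ->
  leb_outer (dilation c l @` A) = (l ^+ d)%:E * leb_outer A.
Proof.
move=> l_gt0; apply/le_anti; rewrite leb_outer_dilation_le //=.
have dilationK : cancel (dilation c l) (dilation (- (l^-1 *: c)) l^-1).
  by move=> y; rewrite /dilation scalerDr scalerA mulVf ?gt_eqF // scale1r addKr.
rewrite -lee_pdivlMl ?exprn_gt0 // -exprVn.
rewrite -[X in leb_outer X](image_id A) -(eq_imagel (fun y _ => dilationK y)) -image_comp.
by apply: leb_outer_dilation_le; rewrite invr_gt0.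
Qed.

Definition cube c (t : R) : set 'rV[R]_d := box (c - const_mx t) (c + const_mx t).

Definition unit_cube : set 'rV[R]_d := box 0%R (const_mx 1%R).

(* We never need that the unit cube has measure [1] (that takes a compactness argument): it is
   enough that its measure is finite, and a vanishing measure makes the volume estimates trivial. *)
Lemma leb_outer_unit_cube_fin_num : (0 < d)%N -> leb_outer unit_cube \is a fin_num.
Proof.
move=> d_gt0; rewrite ge0_fin_numE ?leb_outer_ge0 //.
apply: (@le_lt_trans _ _ 1); last exact: ltry.
pose b n : 'rV[R]_d := if n is 0 then const_mx 1%R else 0%R.
have cover : unit_cube `<=` \bigcup_n box 0%R (b n) by move=> y y01; exists 0%N.
apply: le_trans (leb_outer_le_cover _ _ _ cover) _.
rewrite nneseries_recl // => [|n _]; last by rewrite lee_fin boxvol_ge0.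
rewrite eseries0 => [|[|n] //= _ _]; last by rewrite boxvol00.
by rewrite adde0 lee_fin /boxvol big1 // => i _; rewrite !mxE subr0 max_l ?ler01.
Qed.

Lemma cube_dilation c (t : R) : (0 < t)%R ->
  cube c t = dilation (c - const_mx t) (2 * t) @` unit_cube.
Proof.
move=> t_gt0; have t2_gt0 : (0 < 2 * t)%R by rewrite mulr_gt0.
apply/seteqP; split => y.
  move=> yc; exists ((2 * t)^-1 *: (y - (c - const_mx t))).
    move=> j; have := yc j; rewrite !mxE => /andP[y1 y2].
    rewrite pmulr_rge0 ?invr_gt0 // subr_ge0 y1 ltr_pdivrMl // mulr1 /=; lra.
  by rewrite /dilation scalerA mulfV ?gt_eqF // scale1r addrC subrK.
move=> [z z01 <-] j; rewrite dilationE; have := z01 j; rewrite !mxE => /andP[z0 z1].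
have : (2 * t * z ord0 j < 2 * t)%R by rewrite -[X in (_ < X)%R]mulr1 ltr_pM2l.
have : (0 <= 2 * t * z ord0 j)%R by rewrite mulr_ge0 // ltW.
lra.
Qed.

Lemma leb_outer_cube c (t : R) : (0 < t)%R ->
  leb_outer (cube c t) = ((2 * t) ^+ d)%:E * leb_outer unit_cube.
Proof. by move=> t_gt0; rewrite cube_dilation // leb_outer_dilation // mulr_gt0. Qed.

Lemma leb_outer_big_setU_disjoint (F : nat -> set 'rV[R]_d) n : (0 < d)%N ->
  (forall k, leb_caratheodory (F k)) ->
  (forall k l, (k < n)%N -> (l < n)%N -> k <> l -> F k `&` F l = set0) ->
  \sum_(0 <= k < n) leb_outer (F k) <= leb_outer (\big[setU/set0]_(0 <= k < n) F k).
Proof.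
move=> d_gt0 F_cara; elim: n => [|n IH] F_disj; first by rewrite !big_geq // leb_outer0.
rewrite !big_nat_recr //=; set U := \big[setU/set0]_(0 <= k < n) F k.
have UFn0 : U `&` F n = set0.
  apply/seteqP; split => // x [/(mem_big_setU_nat F) [k kn Fkx] Fnx].
  have kn1 : (k < n.+1)%N := ltnW kn.
  have : (F k `&` F n) x by [].
  by rewrite F_disj // => ekn; move: kn; rewrite ekn ltnn.
apply: le_trans (_ : leb_outer U + leb_outer (F n) <= _).
  by rewrite leeD // IH // => k l kn ln; apply: F_disj; exact: ltnW.
have := F_cara n (U `|` F n).
rewrite setIUl UFn0 set0U setIid setIUl setICr setU0 addeC.
by rewrite setIidl //; exact/disjoints_subset.
Qed.

End BoxesAndCubes.

(** * Separated sequences *)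

Lemma truncn_eq_dist_lt1 {R : archiRealFieldType} (x y : R) : 0 <= x -> 0 <= y ->
  Num.truncn x = Num.truncn y -> `|x - y| < 1.
Proof.
move=> x0 y0 xy; have /andP[x1 x2] := truncn_itv x0; have /andP[y1 y2] := truncn_itv y0.
move: x1 x2 y1 y2; rewrite xy -natr1; move: (Num.truncn y)%:R => q *.
by rewrite ltr_norml; apply/andP; split; lra.
Qed.

Section Packing.
Context {R : realType} {d : nat}.
Implicit Types (y z : 'rV[R]_d) (P : seq 'rV[R]_d).

(* Points in a cube of side [2 rho] that pairwise differ by at least [h] in some coordinate lie
   in pairwise distinct cells of a grid of mesh [h], which has [(M + 1) ^ d] cells. *)
Lemma size_coord_separated_le z (rho h : R) (M : nat) (F : nat -> 'rV[R]_d) (J : seq nat) :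
  0 < h -> 2 * rho <= M%:R * h -> uniq J ->
  (forall k, k \in J -> forall i, `|F k ord0 i - z ord0 i| < rho) ->
  (forall k l, k \in J -> l \in J -> k != l -> exists i, h <= `|F k ord0 i - F l ord0 i|) ->
  (size J <= M.+1 ^ d)%N.
Proof.
move=> h_gt0 Mh uJ F_near F_sep.
pose u k i := (F k ord0 i - z ord0 i + rho) / h.
have u_ge0 k i : k \in J -> 0 <= u k i.
  move=> kJ; rewrite divr_ge0 ?ltW //.
  by have := F_near k kJ i; rewrite ltr_norml => /andP[? _]; lra.
have u_lt k i : k \in J -> (Num.truncn (u k i) < M.+1)%N.
  move=> kJ; rewrite ltnS truncn_le_nat ltr_pdivrMr //.
  have := F_near k kJ i; rewrite ltr_norml => /andP[_ ?].
  have : M%:R * h <= M.+1%:R * h by rewrite ler_pM2r // ler_nat.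
  lra.
pose cell k : {ffun 'I_d -> 'I_M.+1} := [ffun i => inord (Num.truncn (u k i))].
have cell_inj : {in J &, injective cell}.
  move=> k l kJ lJ /ffunP kl; apply/eqP/negPn/negP => /(F_sep k l kJ lJ) [i].
  have := congr1 val (kl i); rewrite !ffunE /= !inordK ?u_lt // => /truncn_eq_dist_lt1.
  rewrite u_ge0 // u_ge0 // => /(_ isT isT).
  rewrite /u -mulrBl normrM normfV (gtr0_norm h_gt0) ltr_pdivrMr // mul1r.
  suff -> : F k ord0 i - z ord0 i + rho - (F l ord0 i - z ord0 i + rho) =
             F k ord0 i - F l ord0 i by move=> /lt_geF->.
  by ring.
rewrite (_ : (M.+1 ^ d = #|{ffun 'I_d -> 'I_M.+1}|)%N); last by rewrite card_ffun !card_ord.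
rewrite -(size_map cell) cardE.
by apply: uniq_leq_size; [rewrite map_inj_in_uniq | move=> f _; rewrite mem_enum].
Qed.

Lemma size_separated_near_le z (rho t : R) (M : nat) (F : nat -> 'rV[R]_d) (J : seq nat) :
  (0 < d)%N -> 0 < t -> 2 * rho <= M%:R * (t / d%:R) -> uniq J ->
  (forall k, k \in J -> enorm (F k - z) < rho) ->
  (forall k l, k \in J -> l \in J -> k != l -> t <= enorm (F k - F l)) ->
  (size J <= M.+1 ^ d)%N.
Proof.
move=> d_gt0 t_gt0 Mt uJ F_near F_sep.
apply: (size_coord_separated_le z rho (t / d%:R) M F J) => //.
- by rewrite divr_gt0 ?ltr0n.
- move=> k kJ i; apply: le_lt_trans (F_near k kJ).
  by have := coord_le_enorm (F k - z) i; rewrite !mxE.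
- move=> k l kJ lJ kl; have [i] := exists_coord_ge _ _ d_gt0 t_gt0 (F_sep k l kJ lJ kl).
  by rewrite !mxE; exists i.
Qed.

Definition separated_seq (s : R) P :=
  forall k l, (k < size P)%N -> (l < size P)%N -> k != l -> s <= enorm (nth 0 P k - nth 0 P l).

Lemma separated_seq_rcons s P y : separated_seq s P ->
  (forall k, (k < size P)%N -> s <= enorm (y - nth 0 P k)) -> separated_seq s (rcons P y).
Proof.
move=> P_sep y_far k l; rewrite size_rcons !nth_rcons !ltnS => kP lP.
have [k_lt|k_ge] := ltnP k (size P); have [l_lt|l_ge] := ltnP l (size P).
- exact: P_sep.
- by rewrite (eqn_leq l (size P)) lP l_ge enorm_distC => _; exact: y_far.
- by rewrite (eqn_leq k (size P)) kP k_ge => _; exact: y_far.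
- by move=> /negP[]; rewrite eqn_leq (leq_trans kP l_ge) (leq_trans lP k_ge).
Qed.

(* A separated sequence of maximal length is maximal for inclusion, hence an [s]-net of [X]. *)
Lemma exists_separated_net (X : set 'rV[R]_d) (s : R) (Mb : nat) :
  (forall P, (forall k, (k < size P)%N -> X (nth 0 P k)) -> separated_seq s P ->
     (size P <= Mb)%N) ->
  exists P, [/\ forall k, (k < size P)%N -> X (nth 0 P k), separated_seq s P &
     forall y, X y -> exists2 k, (k < size P)%N & enorm (y - nth 0 P k) < s].
Proof.
move=> size_bounded.
pose good n := `[< exists P, [/\ size P = n, forall k, (k < size P)%N -> X (nth 0 P k)
                              & separated_seq s P] >].
have good0 : exists n, good n by exists 0%N; apply/asboolP; exists [::].
have good_ub n : good n -> (n <= Mb)%N by move=> /asboolP [P [<-]]; exact: size_bounded.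
case: (ex_maxnP good0 good_ub) => n /asboolP [P [Pn PX P_sep]] n_max.
exists P; split => // y Xy.
have [//|y_far] := pselect (exists2 k, (k < size P)%N & enorm (y - nth 0 P k) < s).
suff /n_max : good n.+1 by rewrite ltnn.
apply/asboolP; exists (rcons P y); split; first by rewrite size_rcons Pn.
  move=> k; rewrite size_rcons nth_rcons ltnS leq_eqVlt => /orP[/eqP->|/[dup] kP ->].
    by rewrite ltnn eqxx.
  exact: PX.
apply: separated_seq_rcons => // k kP; rewrite leNgt; apply/negP => near.
by apply: y_far; exists k.
Qed.

Lemma separated_seq_disjoint_eballs t P k l : separated_seq (2 * t) P ->
  (k < size P)%N -> (l < size P)%N -> k <> l ->
  eball (nth 0 P k) t `&` eball (nth 0 P l) t = set0.
Proof.
move=> P_sep kP lP kl; apply/seteqP; split => // y [yk yl].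
have := P_sep k l kP lP (introN eqP kl); have := enorm_distD (nth 0 P k) y (nth 0 P l).
by move: yk yl; rewrite /eball /= (enorm_distC _ y); lra.
Qed.

Lemma separated_seq_overlap_le t P z (J : seq nat) : (0 < d)%N -> 0 < t ->
  separated_seq (2 * t) P -> uniq J ->
  (forall k, k \in J -> (k < size P)%N /\ eball (nth 0 P k) (2 * t) z) ->
  (size J <= (2 * d).+1 ^ d)%N.
Proof.
move=> d_gt0 t_gt0 P_sep uJ J_near.
apply: (size_separated_near_le z (2 * t) (2 * t) (2 * d) (nth 0 P)) => //.
- by rewrite mulr_gt0.
- by rewrite natrM -mulrA [d%:R * _]mulrC divfK ?pnatr_eq0 -?lt0n.
- by move=> k /J_near[_]; rewrite /eball /= enorm_distC.
- by move=> k l /J_near[kP _] /J_near[lP _]; exact: P_sep.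
Qed.

End Packing.

(** * The distortion constant *)

Section DistortionConstant.
Context {R : realType} {d : nat} {phi : 'rV[R]_d -> 'rV[R]_d}.
Hypothesis phi_bilip : bilipschitz phi.

Lemma bilipschitz_enorm_gt0 x y : x != y -> 0 < enorm (phi x - phi y).
Proof.
move=> xy; have [L [_ /(_ x y)[_ L_co]]] := phi_bilip.
rewrite lt_def enorm_ge0 andbT; apply: contraTneq L_co => ->.
by rewrite mulr0 -ltNge enorm_gt0 subr_eq0.
Qed.

Lemma Kphi_ge_ratio x y : x != y ->
  enorm (phi x - phi y) / enorm (x - y) + enorm (x - y) / enorm (phi x - phi y) <= Kphi phi.
Proof.
move=> xy; apply: ub_le_sup; last by exists x, y.
have [L [_ L_bilip]] := phi_bilip; exists (L + L) => _ [u [v [uv ->]]].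
have uv_gt0 : 0 < enorm (u - v) by rewrite enorm_gt0 subr_eq0.
have [Lu Lv] := L_bilip u v.
by rewrite lerD // ler_pdivrMr // bilipschitz_enorm_gt0.
Qed.

Lemma Kphi_ge2 : (0 < d)%N -> 2 <= Kphi phi.
Proof.
move=> d_gt0; pose e1 : 'rV[R]_d := const_mx 1.
have e1_neq0 : e1 != 0.
  by apply/eqP => /rowP /(_ (Ordinal d_gt0)); rewrite !mxE; exact/eqP/oner_neq0.
apply: le_trans (Kphi_ge_ratio _ _ e1_neq0).
have := bilipschitz_enorm_gt0 _ _ e1_neq0.
have : 0 < enorm (e1 - 0) by rewrite enorm_gt0 subr0.
move: (enorm (phi e1 - phi 0)) (enorm (e1 - 0)) => p q q_gt0 p_gt0.
have -> : p / q + q / p = 2 + (p - q) ^+ 2 / (p * q) by field; rewrite ?gt_eqF.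
by rewrite lerDl divr_ge0 ?sqr_ge0 ?mulr_ge0 ?ltW.
Qed.

Lemma Kphi_lipschitz x y : enorm (phi x - phi y) <= Kphi phi * enorm (x - y).
Proof.
have [->|xy] := eqVneq x y; first by rewrite !subrr enorm0 mulr0.
have xy_gt0 : 0 < enorm (x - y) by rewrite enorm_gt0 subr_eq0.
rewrite -ler_pdivrMr //; apply: le_trans (Kphi_ge_ratio _ _ xy).
by rewrite lerDl divr_ge0 ?enorm_ge0.
Qed.

Lemma Kphi_colipschitz x y : enorm (x - y) <= Kphi phi * enorm (phi x - phi y).
Proof.
have [->|xy] := eqVneq x y; first by rewrite !subrr enorm0 mulr0.
rewrite -ler_pdivrMr ?bilipschitz_enorm_gt0 //; apply: le_trans (Kphi_ge_ratio _ _ xy).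
by rewrite lerDr divr_ge0 ?enorm_ge0.
Qed.

End DistortionConstant.

(** * Volume of balls and packing of the image of a ball *)

Section BallVolume.
Context {R : realType} {d : nat}.
Hypothesis d_gt0 : (0 < d)%N.
Implicit Types (c : 'rV[R]_d) (t : R).
Local Open Scope ereal_scope.

Lemma eball_sub_cube c t : eball c t `<=` cube c t.
Proof.
move=> y yc j; have := le_lt_trans (coord_le_enorm (y - c) j) yc.
by rewrite !mxE ltr_norml => /andP[? ?]; apply/andP; split; lra.
Qed.

Lemma cube_sub_eball c t : (0 < t)%R -> cube c (t / (2 * d%:R)) `<=` eball c t.
Proof.
move=> t_gt0 y yc; have d_pos : (0 < d%:R :> R)%R by rewrite ltr0n.
suff : (enorm (y - c) < d%:R * (t / d%:R))%R by rewrite mulrC divfK ?gt_eqF.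
apply: enorm_lt_coord => // [|i]; first by rewrite divr_gt0.
have := yc i; rewrite !mxE.
have -> : (t / (2 * d%:R) = t / d%:R / 2)%R.
  by rewrite -[RHS]mulrA -invfM [(d%:R * 2)%R]mulrC.
have : (0 < t / d%:R)%R by rewrite divr_gt0.
by move: (t / d%:R)%R => q q_gt0 /andP[? ?]; rewrite ltr_norml; apply/andP; split; lra.
Qed.

Lemma leb_outer_eball_le c t : (0 < t)%R ->
  leb_outer (eball c t) <= ((2 * t) ^+ d)%:E * leb_outer (unit_cube : set 'rV[R]_d).
Proof.
by move=> t_gt0; rewrite -(leb_outer_cube c) //; exact: le_leb_outer (eball_sub_cube c t).
Qed.

Lemma leb_outer_eball_ge c t : (0 < t)%R ->
  ((t / d%:R) ^+ d)%:E * leb_outer (unit_cube : set 'rV[R]_d) <= leb_outer (eball c t).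
Proof.
move=> t_gt0; apply: le_trans (le_leb_outer _ _ (cube_sub_eball c t t_gt0)).
rewrite leb_outer_cube ?divr_gt0 ?mulr_gt0 ?ltr0n //.
by rewrite (_ : 2 * (t / (2 * d%:R)) = t / d%:R)%R //; field; rewrite pnatr_eq0 -lt0n.
Qed.

Lemma leb_outer_eball_fin_num c t : (0 < t)%R -> leb_outer (eball c t) \is a fin_num.
Proof.
move=> t_gt0; rewrite ge0_fin_numE ?leb_outer_ge0 //.
apply: le_lt_trans (leb_outer_eball_le c t t_gt0) _.
by rewrite -(fineK (leb_outer_unit_cube_fin_num d_gt0)) -EFinM ltry.
Qed.

Lemma leb_outer_disjoint_eballs_ge (c : nat -> 'rV[R]_d) n t (A : set 'rV[R]_d) :
  (0 < t)%R ->
  (forall k l, (k < n)%N -> (l < n)%N -> k <> l -> eball (c k) t `&` eball (c l) t = set0) ->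
  (forall k, (k < n)%N -> eball (c k) t `<=` A) ->
  (n%:R * (t / d%:R) ^+ d)%:E * leb_outer (unit_cube : set 'rV[R]_d) <= leb_outer A.
Proof.
move=> t_gt0 balls_disj balls_sub; pose Q k := cube (c k) (t / (2 * d%:R)).
have Q_sub k : Q k `<=` eball (c k) t by exact: cube_sub_eball.
have Q_disj k l : (k < n)%N -> (l < n)%N -> k <> l -> Q k `&` Q l = set0.
  move=> kn ln kl; apply/seteqP; split => // y [/Q_sub yk /Q_sub yl].
  by rewrite -(balls_disj k l kn ln kl).
have Q_union_sub : \big[setU/set0]_(0 <= k < n) Q k `<=` A.
  by move=> y /(mem_big_setU_nat Q) [k kn /Q_sub /(balls_sub k kn)].
apply: (le_trans _ (le_leb_outer _ _ Q_union_sub)).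
have Q_cara k : leb_caratheodory (Q k) by exact: leb_caratheodory_box.
apply: (le_trans _ (leb_outer_big_setU_disjoint Q n d_gt0 Q_cara Q_disj)).
rewrite (eq_bigr (fun=> ((t / d%:R) ^+ d)%:E * leb_outer (unit_cube : set 'rV[R]_d))); last first.
  move=> k _; rewrite /Q leb_outer_cube ?divr_gt0 ?mulr_gt0 ?ltr0n //.
  by rewrite (_ : 2 * (t / (2 * d%:R)) = t / d%:R)%R //; field; rewrite pnatr_eq0 -lt0n.
rewrite -(fineK (leb_outer_unit_cube_fin_num d_gt0)) -EFinM sumEFin sumr_const_nat subn0.
by rewrite -mulrA mulr_natl.
Qed.

Lemma sum_leb_outer_eball_le (c : nat -> 'rV[R]_d) n (x0 : 'rV[R]_d) (s r : R) :
  (0 < s)%R -> (0 < r)%R ->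
  (n%:R * (s / d%:R) ^+ d)%:E * leb_outer (unit_cube : set 'rV[R]_d) <=
    ((4 * r) ^+ d)%:E * leb_outer (unit_cube : set 'rV[R]_d) ->
  (\sum_(k < n) fine (leb_outer (eball (c k) s)) <=
    (8 * d%:R ^+ 2) ^+ d * fine (leb_outer (eball x0 r)))%R.
Proof.
move=> s_gt0 r_gt0; have d_pos : (0 < d%:R :> R)%R by rewrite ltr0n.
set u := fine (leb_outer (unit_cube : set 'rV[R]_d)).
have uE : leb_outer (unit_cube : set 'rV[R]_d) = u%:E.
  by rewrite fineK // leb_outer_unit_cube_fin_num.
have u_ge0 : (0 <= u)%R by rewrite -lee_fin -uE leb_outer_ge0.
rewrite uE -!EFinM lee_fin => count.
have ball_le k : (fine (leb_outer (eball (c k) s)) <= (2 * s) ^+ d * u)%R.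
  by rewrite -lee_fin fineK ?leb_outer_eball_fin_num // EFinM -uE leb_outer_eball_le.
have ball_ge : ((r / d%:R) ^+ d * u <= fine (leb_outer (eball x0 r)))%R.
  by rewrite -lee_fin fineK ?leb_outer_eball_fin_num // EFinM -uE leb_outer_eball_ge.
apply: (@le_trans _ _ (\sum_(k < n) (2 * s) ^+ d * u)%R); first exact: ler_sum.
rewrite sumr_const card_ord.
have -> : ((2 * s) ^+ d * u *+ n = (2 * d%:R) ^+ d * (n%:R * (s / d%:R) ^+ d * u))%R.
  rewrite (_ : 2 * s = 2 * d%:R * (s / d%:R))%R; last by field; rewrite gt_eqF.
  by rewrite exprMn -mulr_natl; ring.
apply: le_trans (ler_wpM2l _ count) _; first by rewrite exprn_ge0 // mulr_ge0.
rewrite mulrA.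
have -> : ((2 * d%:R) ^+ d * (4 * r) ^+ d = (8 * d%:R ^+ 2) ^+ d * (r / d%:R) ^+ d)%R.
  by rewrite -!exprMn; congr (_ ^+ _)%R; field; rewrite gt_eqF.
by rewrite -mulrA ler_wpM2l ?exprn_ge0 ?mulr_ge0.
Qed.

End BallVolume.

Section ImageBallPacking.
Context {R : realType} {d : nat} (phi : 'rV[R]_d -> 'rV[R]_d) (x0 : 'rV[R]_d) (r : R).
Hypotheses (d_gt0 : (0 < d)%N) (phi_bij : bijective phi) (phi_bilip : bilipschitz phi)
  (phi_preserves : preserves_lebesgue phi) (r_gt0 : 0 < r).

Let K_gt0 : 0 < Kphi phi.
Proof. exact: lt_le_trans (Kphi_ge2 phi_bilip d_gt0). Qed.

Lemma image_eball_sub y t : phi @` eball y t `<=` eball (phi y) (Kphi phi * t).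
Proof.
move=> _ [x xy <-]; apply: le_lt_trans (Kphi_lipschitz phi_bilip x y) _.
by rewrite ltr_pM2l.
Qed.

Lemma eball_sub_image y t : eball (phi y) t `<=` phi @` eball y (Kphi phi * t).
Proof.
have [psi phiK psiK] := phi_bij; move=> w wy; exists (psi w); last exact: psiK.
rewrite /eball /= enorm_distC; apply: le_lt_trans (Kphi_colipschitz phi_bilip _ _) _.
by rewrite psiK ltr_pM2l // enorm_distC.
Qed.

Lemma image_eball_separated_net : exists P : seq 'rV[R]_d, [/\
  forall k, (k < size P)%N -> (phi @` eball x0 r) (nth 0 P k),
  separated_seq (2 * (r / Kphi phi)) P &
  phi @` eball x0 r `<=` \bigcup_(k in `I_(size P)) eball (nth 0 P k) (2 * (r / Kphi phi))].
Proof.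
set t := 2 * (r / Kphi phi); have t_gt0 : 0 < t by rewrite mulr_gt0 ?divr_gt0.
have [M M_large] : exists M : nat, 2 * (Kphi phi * r) <= M%:R * (t / d%:R).
  have h_gt0 : 0 < t / d%:R by rewrite divr_gt0 ?ltr0n.
  exists (Num.truncn (2 * (Kphi phi * r) / (t / d%:R))).+1.
  rewrite -ler_pdivrMr //; apply/ltW/truncnS_gt.
have [P [PX P_sep P_net]] : exists P, [/\
    forall k, (k < size P)%N -> (phi @` eball x0 r) (nth 0 P k), separated_seq t P &
    forall y, (phi @` eball x0 r) y -> exists2 k, (k < size P)%N & enorm (y - nth 0 P k) < t].
  apply: (exists_separated_net _ _ (M.+1 ^ d)) => P PX P_sep.
  rewrite -(size_iota 0 (size P)).
  apply: (size_separated_near_le (phi x0) (Kphi phi * r) t M (nth 0 P)) => //.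
      exact: iota_uniq.
    move=> k; rewrite mem_iota add0n => /PX /image_eball_sub.
    by rewrite /eball /= enorm_distC.
  by move=> k l; rewrite !mem_iota !add0n; exact: P_sep.
by exists P; split => // y /P_net [k kP yk]; exists k.
Qed.

(* [phi^-1] maps the disjoint balls [B(c_k, r / K)] into [B(x0, 2 r)], a subset of a cube of
   side [4 r]. *)
Lemma image_eball_net_count P :
  (forall k, (k < size P)%N -> (phi @` eball x0 r) (nth 0 P k)) ->
  separated_seq (2 * (r / Kphi phi)) P ->
  (((size P)%:R * (r / Kphi phi / d%:R) ^+ d)%:E * leb_outer (unit_cube : set 'rV[R]_d) <=
   ((4 * r) ^+ d)%:E * leb_outer (unit_cube : set 'rV[R]_d))%E.
Proof.
move=> PX P_sep; have s_gt0 : 0 < r / Kphi phi by rewrite divr_gt0.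
have r2_gt0 : 0 < 2 * r by rewrite mulr_gt0.
rewrite (_ : 4 * r = 2 * (2 * r)); last by rewrite mulrA -natrM.
rewrite -(leb_outer_cube x0) // -(phi_preserves (cube x0 (2 * r))); last first.
  exact/leb_caratheodory_measurable/leb_caratheodory_box.
apply: (leb_outer_disjoint_eballs_ge d_gt0 (nth 0 P)) => // [k l kP lP kl|k kP].
  exact: separated_seq_disjoint_eballs.
have [y yx0 <-] := PX k kP.
apply: subset_trans (eball_sub_image y _) _; rewrite mulrC divfK ?gt_eqF //.
apply/image_subset/(subset_trans _ (eball_sub_cube _ _)) => z zy.
by apply: le_lt_trans (enorm_distD z y x0) _; rewrite /eball /= in zy yx0; lra.
Qed.

End ImageBallPacking.

Lemma esum_powR_average_le {R : realType} (n : nat) (w : nat -> R) (W Y C p : R) :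
  (forall k, 0 <= w k) -> 0 <= W -> 1 <= C -> 0 <= Y -> 1 <= p ->
  \sum_(k < n) w k <= C * W ->
  (((\esum_(k in `I_n) (w k * powR Y p)%:E) * (W%:E)^-1) `^ p^-1 <= (C * Y)%:E)%E.
Proof.
move=> w_ge0 W_ge0 C_ge1 Y_ge0 p_ge1 sum_le.
have p_gt0 : 0 < p by apply: lt_le_trans p_ge1.
have C_ge0 : 0 <= C by apply: le_trans C_ge1.
rewrite esum_fset ?finite_II // => [|k _]; last by rewrite lee_fin mulr_ge0 ?powR_ge0.
rewrite -fsbig_ord sumEFin -mulr_suml.
have [W0|W_neq0] := eqVneq W 0.
  have -> : \sum_(k < n) w k = 0.
    by apply/le_anti; rewrite sumr_ge0 // andbT (le_trans sum_le) // W0 mulr0.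
  by rewrite mul0r mul0e poweR0r ?invr_neq0 ?gt_eqF // lee_fin mulr_ge0.
have W_gt0 : 0 < W by rewrite lt_def W_neq0.
rewrite inver gt_eqF // -EFinM poweR_EFin lee_fin.
have avg_le : (\sum_(k < n) w k) * Y `^ p / W <= C * Y `^ p.
  by rewrite ler_pdivrMr // mulrAC ler_wpM2r ?powR_ge0.
have avg_ge0 : 0 <= (\sum_(k < n) w k) * Y `^ p / W.
  by rewrite divr_ge0 ?mulr_ge0 ?powR_ge0 ?sumr_ge0.
have pinv_ge0 : 0 <= p^-1 by rewrite invr_ge0 ltW.
apply: le_trans (ge0_ler_powR pinv_ge0 avg_ge0 _ avg_le) _.
  by rewrite nnegrE mulr_ge0 ?powR_ge0.
rewrite powRM ?powR_ge0 // -powRrM mulfV ?gt_eqF // powRr1 // ler_wpM2r //.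
by apply: le_trans (ler_powR C_ge1 (_ : p^-1 <= 1)) _; rewrite ?invf_le1 ?powRr1.
Qed.

Lemma rho_ge0 {R : realType} (a r : R) : 1 <= r -> 0 <= rho a r.
Proof. by move=> r_ge1; rewrite /rho; case: ifP => _; [exact: ln_ge0 | exact: powR_ge0]. Qed.

Theorem lemma1p1 (R : realType) (d : nat) (hd : (0 < d)%N) :
  exists N : nat,
  forall a : R, 0 <= a <= 1 ->
  exists C : R -> R,
  forall phi : 'rV[R]_d -> 'rV[R]_d,
    bijective phi -> bilipschitz phi -> preserves_lebesgue phi ->
  forall (x0 : 'rV[R]_d) (r : R), 0 < r ->
  exists (I : set nat) (c : nat -> 'rV[R]_d) (s : nat -> R),
    (forall k, I k -> 0 < s k) /\
    (* (i) bounded covering of phi(B) by the doubled balls *)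
    (phi @` eball x0 r `<=` \bigcup_(k in I) eball (c k) (2 * s k)) /\
    (forall (z : 'rV[R]_d) (J : seq nat), uniq J ->
        (forall k, k \in J -> I k /\ eball (c k) (2 * s k) z) ->
        (size J <= N)%N) /\
    (* (ii) pairwise disjoint *)
    (forall k l, I k -> I l -> k <> l -> eball (c k) (s k) `&` eball (c l) (s l) = set0) /\
    (* (iii) *)
    (forall p : R, 1 <= p ->
      (((\esum_(k in I) (fine (leb_outer (eball (c k) (s k)))
                          * powR `|rho a (r / s k)| p)%:E)
         * (leb_outer (eball x0 r))^-1) `^ p^-1
       <= (C p * rho a (Kphi phi))%:E)%E).
Proof.
exists ((2 * d).+1 ^ d)%N => a _; exists (fun=> (8 * d%:R ^+ 2) ^+ d).
move=> phi phi_bij phi_bilip phi_preserves x0 r r_gt0.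
have K_ge2 := Kphi_ge2 phi_bilip hd.
have K_gt0 : 0 < Kphi phi by apply: lt_le_trans K_ge2.
have s_gt0 : 0 < r / Kphi phi by rewrite divr_gt0.
have [P [PX P_sep P_cover]] := image_eball_separated_net phi x0 r hd phi_bilip r_gt0.
exists `I_(size P), (nth 0 P), (fun=> r / Kphi phi); do 2 split => //.
split; first by move=> z J uJ; exact: (separated_seq_overlap_le _ _ _ _ hd s_gt0 P_sep uJ).
split; first by move=> k l; exact: separated_seq_disjoint_eballs.
have rhoK_ge0 : 0 <= rho a (Kphi phi) by rewrite rho_ge0 // (le_trans _ K_ge2) // ler1n.
have count := image_eball_net_count phi x0 r hd phi_bij phi_bilip phi_preserves r_gt0 P PX P_sep.
move=> p p_ge1; rewrite divKf ?gt_eqF // ger0_norm //.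
rewrite -(fineK (leb_outer_eball_fin_num hd x0 r r_gt0)).
have d_ge1 : 1 <= d%:R :> R by rewrite ler1n.
apply: esum_powR_average_le => //.
- by move=> k; rewrite fine_ge0 ?leb_outer_ge0.
- by rewrite fine_ge0 ?leb_outer_ge0.
- by apply: exprn_ege1; rewrite expr2; nra.
- exact: (sum_leb_outer_eball_le hd _ _ _ _ _ s_gt0 r_gt0 count).
Qed.
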